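(* Let $J,L\subseteq S$ with $n:=\#J\ge2$, $J\setminus\{j_1,j_n\}=L\setminus\{l_1\}$ and $j_1<l_1$. Then in $A$: $$\tau^-_J-\tau^-_Lt_{j_n}-\sum_{i=2}^{n-1}(-1)^i\tau^-_{(J\cup L)\setminus\{j_i\}}+(-1)^nt_{j_1}\tau^-_L=0.$$
   Context: $S$ is a finite set with a total order $<$, $R$ a commutative ring with $1$, $q\in R$, $A=R\langle t_s\mid s\in S\rangle$ the free associative algebra. Subsets are enumerated increasingly: $J=\{j_1<\dots<j_{\#J}\}$, $L=\{l_1<\dots\}$. $t_J=t_{j_1}\cdots t_{j_{\#J}}$; for $I=\{j_{\alpha_1}<\dots<j_{\alpha_{\#I}}\}\subseteq J$, $\ell_J(I)=\sum_\nu(\alpha_\nu-\nu)$; $\tau^-_J=\sum_{I\subseteq J,\ \#I\text{ odd}}(-1)^{\ell_J(I)}(-q)^{(\#I-1)/2}t_{J\setminus I}$. *)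

From HB Require Import structures.
From mathcomp Require Import all_boot all_order all_algebra.
Set Implicit Arguments. Unset Strict Implicit. Unset Printing Implicit Defensive.
Import Order.TTheory GRing.Theory.
Local Open Scope ring_scope.

(* The free associative algebra A = R<t_s | s in S>.                       *)
(* An element is represented by a formal R-linear combination of words    *)
(* (a list of pairs (coefficient, word)); words in the alphabet S are the  *)
(* monomials t_{s1} ... t_{sk}.  Two representations denote the same      *)
(* element of A iff they have the same coefficient on every word, see      *)
(* [fa_coef] / [fa_eq].  Multiplication is concatenation of words.         *)

Section FreeAlg.
Variables (R : comPzRingType) (S : eqType).

Definition fa := seq (R * seq S).

Definition fa_coef (x : fa) (w : seq S) : R := \sum_(p <- x | p.2 == w) p.1.

Definition fa_eq (x y : fa) : Prop := forall w, fa_coef x w = fa_coef y w.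

Definition fa_zero : fa := [::].
Definition fa_add (x y : fa) : fa := x ++ y.
Definition fa_scale (c : R) (x : fa) : fa := [seq (c * p.1, p.2) | p <- x].
Definition fa_opp (x : fa) : fa := fa_scale (-1) x.
Definition fa_sub (x y : fa) : fa := fa_add x (fa_opp y).
Definition fa_mul (x y : fa) : fa :=
  [seq (p.1 * p'.1, p.2 ++ p'.2) | p <- x, p' <- y].
Definition fa_word (w : seq S) : fa := [:: (1, w)].
Definition fa_sum (xs : seq fa) : fa := flatten xs.
End FreeAlg.

Section Subsets.
Variables (d : Order.disp_t) (S : finOrderType d).

(* increasing enumeration j_1 < ... < j_{#J} (0-based list) *)
Definition senum (J : {set S}) : seq S := sort (fun x y : S => (x <= y)%O) (fintype.enum J).

Definition tword (J : {set S}) : seq S := senum J.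

(* l_J(I) = sum_nu (alpha_nu - nu), where I = {j_{alpha_1} < ... }:
   for the nu-th element i of I, alpha_nu - nu = (index of i in J) - (index of i in I) *)
Definition ellJ (J I : {set S}) : nat :=
  \sum_(i in I) (index i (senum J) - index i (senum I))%N.

Variable (R : comPzRingType).

Definition tau_minus (q : R) (J : {set S}) : fa R S :=
  [seq ((-1) ^+ ellJ J K * (- q) ^+ (#|K|.-1)./2, tword (J :\: K))
  | K : {set S} <- [seq K : {set S} <- fintype.enum (powerset J) | odd #|K|]].

End Subsets.

From HB Require Import structures.
From mathcomp Require Import all_boot all_order all_algebra ring.
Set Implicit Arguments. Unset Strict Implicit. Unset Printing Implicit Defensive.
Import Order.TTheory GRing.Theory.
Local Open Scope ring_scope.

(* For J = {x} ∪ J' with x = min J, splitting off x in the sum defining τ^-_J and its even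
   analogue τ^+_J (sum over the I of even size, weight (−q)^{#I/2}) gives the recursions
   τ^-_J = τ^+_{J'} − t_x τ^-_{J'} and τ^+_J = t_x τ^+_{J'} − q τ^-_{J'}; splitting off the
   maximum gives similar right-hand recursions.  By induction, deleting one letter of a word u
   in all possible ways with alternating signs sums to 0 for τ^- and to τ^-_u for τ^+.
   With J = (y, u, z) and L = (b, u) increasing, the middle sum of the identity runs over the
   words (y, b, u minus one letter, z); expanding y, b on the left and z on the right, it
   collapses to terms in τ^±_u that cancel against the other three terms. *)

Section RemNth.
Variable T : Type.

Fixpoint rem_nth (k : nat) (s : seq T) : seq T :=
  match s, k with
  | [::], _ => [::]
  | _ :: s', 0%N => s'
  | x :: s', k'.+1 => x :: rem_nth k' s'
  end.

Lemma size_rem_nth k s : (k < size s)%N -> size (rem_nth k s) = (size s).-1.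
Proof. by elim: s k => [|x [|y s] IH] [|k] //= /IH ->. Qed.

End RemNth.

Lemma rem_nth_uniq (T : eqType) (x0 : T) k (s : seq T) :
  uniq s -> (k < size s)%N -> rem (nth x0 s k) s = rem_nth k s.
Proof.
elim: s k => [|x s IH] [|k] //= /andP[xs us] ltks; first by rewrite eqxx.
rewrite IH // ifN_eq //; apply: contraNneq xs => ->; exact: mem_nth.
Qed.

Section CoefficientCalculus.
Variables (R : comPzRingType) (S : eqType) (q : R).
Implicit Types (s X w : seq S) (f : seq S -> R).

(* Coefficient functions of t_x f and f t_c, where f is that of an element of A. *)
Definition lmulT (x : S) f w : R := (ohead w == Some x)%:R * f (behead w).
Definition rmulT f (c : S) w : R :=
  (ohead (rev w) == Some c)%:R * f (rev (behead (rev w))).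

Lemma lmulT_rmulT x c f w : lmulT x (rmulT f c) w = rmulT (lmulT x f) c w.
Proof.
rewrite /lmulT /rmulT; case: w => [|z v] /=; first by rewrite !mul0r.
case/lastP: v => [|u y] /=; first by rewrite !mul0r !mulr0.
by rewrite rev_rcons /= rev_cons rev_rcons /= revK rev_rcons /= revK mulrCA.
Qed.

Lemma eq_lmulT x f g : f =1 g -> lmulT x f =1 lmulT x g.
Proof. by move=> efg w; rewrite /lmulT efg. Qed.

Lemma eq_rmulT c f g : f =1 g -> rmulT f c =1 rmulT g c.
Proof. by move=> efg w; rewrite /rmulT efg. Qed.

Lemma eq_cons_lmulT x s w : ((x :: s) == w)%:R = lmulT x (fun v => (s == v)%:R) w.
Proof.
rewrite /lmulT; case: w => [|z v] /=; first by rewrite mul0r.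
by rewrite eqseq_cons -mulnb natrM eq_sym.
Qed.

(* For s the increasing enumeration of J, tau_rec s true is the coefficient function of τ^-_J
   and tau_rec s false that of its even analogue τ^+_J. *)
Fixpoint tau_rec s (parity : bool) w : R :=
  match s with
  | [::] => if parity then 0 else (w == [::])%:R
  | x :: s' => if parity then tau_rec s' false w - lmulT x (tau_rec s' true) w
               else lmulT x (tau_rec s' false) w - q * tau_rec s' true w
  end.

Lemma tau_rec_rcons s c w :
  tau_rec (rcons s c) true w = rmulT (tau_rec s true) c w + (-1)^+size s * tau_rec s false w /\
  tau_rec (rcons s c) false w = rmulT (tau_rec s false) c w + (-1)^+size s * q * tau_rec s true w.
Proof.
elim: s w => [|x s IH] w.
  rewrite /= /lmulT /rmulT /= !mulr0 !subr0 add0r addr0 !expr0 !mul1r; split=> //.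
  case/lastP: w => [|v t]; first by rewrite !mul0r.
  rewrite rev_rcons /= revK; case: v => [|y v] //=.
  by rewrite -size_eq0 size_rcons !mulr0.
have [A1 A2] := IH w; have [B1 B2] := IH (behead w).
have lmulT_rcons b : lmulT x (tau_rec (rcons s c) b) w =
    lmulT x (rmulT (tau_rec s b) c) w
    + (-1)^+size s * (if b then 1 else q) * lmulT x (tau_rec s (~~ b)) w.
  by case: b; rewrite /lmulT ?B1 ?B2; ring.
have rmulT_cons b : rmulT (tau_rec (x :: s) b) c w =
    if b then rmulT (tau_rec s false) c w - rmulT (lmulT x (tau_rec s true)) c w
    else rmulT (lmulT x (tau_rec s false)) c w - q * rmulT (tau_rec s true) c w.
  by case: b; rewrite /rmulT /=; ring.
rewrite !rmulT_cons rcons_cons /= !lmulT_rcons A1 A2 -!lmulT_rmulT exprS; split; ring.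
Qed.

Lemma alt_sum_tau_rec_rem X w :
  \sum_(k < size X) (-1)^+k * tau_rec (rem_nth k X) true w = 0 /\
  \sum_(k < size X) (-1)^+k * tau_rec (rem_nth k X) false w = tau_rec X true w.
Proof.
elim: X w => [|x X IH] w; first by rewrite !big_ord0.
rewrite !big_ord_recl !expr0 !mul1r.
have shift b : \sum_(i < size X) (-1) ^+ (@lift (size X).+1 ord0 i) *
     tau_rec (rem_nth (@lift (size X).+1 ord0 i) (x :: X)) b w
   = - \sum_(i < size X) (-1) ^+ i * tau_rec (x :: rem_nth i X) b w.
  rewrite -sumrN; apply: eq_bigr => i _.
  by rewrite lift0 exprS mulN1r mulNr.
have [H1 H2] := IH w; have [H3 H4] := IH (behead w).
rewrite !shift /=; split.
  under eq_bigr do rewrite mulrBr /lmulT mulrCA.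
  by rewrite sumrB -mulr_sumr H2 H3 mulr0 subr0 subrr.
under eq_bigr do rewrite mulrBr /lmulT mulrCA [_ * (q * _)]mulrCA.
by rewrite sumrB -!mulr_sumr H4 H1 mulr0 subr0.
Qed.

Lemma alt_sum_tau_rec_cons2 a b X w :
  \sum_(k < size X) (-1)^+k * tau_rec (a :: b :: rem_nth k X) true w =
    lmulT b (tau_rec X true) w - lmulT a (tau_rec X true) w /\
  \sum_(k < size X) (-1)^+k * tau_rec (a :: b :: rem_nth k X) false w =
    lmulT a (lmulT b (tau_rec X true)) w - q * tau_rec X true w.
Proof.
pose A k b' w' := (-1)^+k * tau_rec (rem_nth k X) b' w'.
have [H1 H2] := alt_sum_tau_rec_rem X w.
have [H3 H4] := alt_sum_tau_rec_rem X (behead w).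
have [H5 H6] := alt_sum_tau_rec_rem X (behead (behead w)).
rewrite /lmulT /=; split.
- transitivity ((ohead w == Some b)%:R * \sum_(k < size X) A k false (behead w)
    - q * \sum_(k < size X) A k true w
    - (ohead w == Some a)%:R * \sum_(k < size X) A k false (behead w)
    + (ohead w == Some a)%:R * (ohead (behead w) == Some b)%:R
      * \sum_(k < size X) A k true (behead (behead w))).
    rewrite !mulr_sumr -!sumrB -big_split; apply: eq_bigr => k _.
    by rewrite /A /= /lmulT /=; ring.
  by rewrite /A H4 H1 H5; ring.
- transitivity ((ohead w == Some a)%:R * (ohead (behead w) == Some b)%:R
      * \sum_(k < size X) A k false (behead (behead w))
    - (ohead w == Some a)%:R * q * \sum_(k < size X) A k true (behead w)
    - q * \sum_(k < size X) A k false w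
    + q * (ohead w == Some b)%:R * \sum_(k < size X) A k true (behead w)).
    rewrite !mulr_sumr -!sumrB -big_split; apply: eq_bigr => k _.
    by rewrite /A /= /lmulT /=; ring.
  by rewrite /A H6 H3 H2; ring.
Qed.

Lemma tau_rec_exchange a b c X w :
  tau_rec (a :: rcons X c) true w - rmulT (tau_rec (b :: X) true) c w
  - \sum_(k < size X) (-1)^+k * tau_rec (a :: b :: rcons (rem_nth k X) c) true w
  + (-1)^+size X * lmulT a (tau_rec (b :: X) true) w = 0.
Proof.
pose v := rev (behead (rev w)).
have peel_c : \sum_(k < size X) (-1)^+k * tau_rec (a :: b :: rcons (rem_nth k X) c) true w =
    (ohead (rev w) == Some c)%:R
      * \sum_(k < size X) (-1)^+k * tau_rec (a :: b :: rem_nth k X) true v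
    - (-1)^+size X * \sum_(k < size X) (-1)^+k * tau_rec (a :: b :: rem_nth k X) false w.
  rewrite !mulr_sumr -sumrB; apply: eq_bigr => k _.
  rewrite -!rcons_cons (tau_rec_rcons _ _ _).1 /rmulT /= size_rem_nth //.
  by rewrite prednK ?(leq_ltn_trans _ (ltn_ord k)) // exprS; ring.
have [sumT _] := alt_sum_tau_rec_cons2 a b X v.
have [_ sumF] := alt_sum_tau_rec_cons2 a b X w.
rewrite peel_c sumT sumF -rcons_cons (tau_rec_rcons _ _ _).1 /rmulT /= /lmulT /= exprS /v.
ring.
Qed.

End CoefficientCalculus.

Section FreeAlgebraCoefficients.
Variables (R : comPzRingType) (S : eqType).
Implicit Types (x : fa R S) (w : seq S).

Lemma fa_coef_zero w : fa_coef (fa_zero R S) w = 0.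
Proof. by rewrite /fa_coef big_nil. Qed.

Lemma fa_coef_sum (xs : seq (fa R S)) w :
  fa_coef (fa_sum xs) w = \sum_(x <- xs) fa_coef x w.
Proof. by rewrite /fa_coef big_flatten. Qed.

Lemma fa_coef_scale c x w : fa_coef (fa_scale c x) w = c * fa_coef x w.
Proof. by rewrite /fa_coef big_map mulr_sumr. Qed.

Lemma fa_coef_opp x w : fa_coef (fa_opp x) w = - fa_coef x w.
Proof. by rewrite fa_coef_scale mulN1r. Qed.

Lemma fa_coef_mul_wordl a x w :
  fa_coef (fa_mul (fa_word R [:: a]) x) w = lmulT a (fa_coef x) w.
Proof.
rewrite /fa_mul /fa_word /= cats0 /fa_coef big_map /lmulT mulr_sumr.
rewrite big_mkcond [RHS]big_mkcond; apply: eq_bigr => p _ /=.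
case: w => [|z v] /=; first by rewrite mul0r if_same.
have -> : (Some z == Some a) = (a == z) by apply/eqP/eqP => [[->]|->].
by rewrite eqseq_cons; case: (a == z); case: (p.2 == v); rewrite ?mul1r ?mul0r.
Qed.

Lemma fa_coef_mul_wordr c x w :
  fa_coef (fa_mul x (fa_word R [:: c])) w = rmulT (fa_coef x) c w.
Proof.
have -> : fa_mul x (fa_word R [:: c]) = [seq (p.1 * 1, p.2 ++ [:: c]) | p <- x].
  by rewrite /fa_mul; elim: x => //= p x ->.
rewrite /fa_coef big_map /rmulT mulr_sumr big_mkcond [RHS]big_mkcond.
apply: eq_bigr => p _ /=; case/lastP: w => [|u y] /=.
  by rewrite mul0r; case: (p.2).
rewrite rev_rcons /= revK cats1 eqseq_rcons.
have -> : (Some y == Some c) = (c == y) by apply/eqP/eqP => [[->]|->].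
by case: (c == y); case: (p.2 == u); rewrite ?mul1r ?mul0r ?mulr1 ?andbF.
Qed.

End FreeAlgebraCoefficients.

Lemma index_filter_le (T : eqType) (P : pred T) (s : seq T) i : P i ->
  (index i (filter P s) <= index i s)%N.
Proof.
move=> Pi; elim: s => [|y s IH] //=.
have [->|ne] := eqVneq y i; first by rewrite Pi /= eqxx.
by case: (P y) => /=; [rewrite ifN // ltnS | exact: leqW].
Qed.

Section IncreasingEnumeration.
Variables (d : Order.disp_t) (S : finOrderType d).
Implicit Types (A J K : {set S}) (x y : S).

Lemma senum_sorted J : sorted <%O (senum J).
Proof.
rewrite lt_sorted_uniq_le sort_uniq enum_uniq.
exact: (sort_sorted (@le_total _ S)).
Qed.

Lemma mem_senum J : senum J =i J.
Proof. by move=> x; rewrite mem_sort mem_enum. Qed.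

Lemma size_senum J : size (senum J) = #|J|.
Proof. by rewrite size_sort cardE. Qed.

Lemma senum_eq_sorted J s : sorted <%O s -> s =i J -> senum J = s.
Proof.
move=> sorted_s eq_sJ; apply: lt_sorted_eq => //; first exact: senum_sorted.
by move=> y; rewrite mem_senum eq_sJ.
Qed.

Lemma senum_subset K J : K \subset J -> senum K = [seq y <- senum J | y \in K].
Proof.
move=> sKJ; apply: senum_eq_sorted; first exact/lt_sorted_filter/senum_sorted.
move=> y; rewrite mem_filter mem_senum andb_idr //; exact: (subsetP sKJ).
Qed.

Lemma index_senum_subset K J i : K \subset J -> i \in K ->
  (index i (senum K) <= index i (senum J))%N.
Proof. by move=> sKJ iK; rewrite (senum_subset sKJ); apply: index_filter_le. Qed.

Lemma senum_setU1_lt x A : {in A, forall y, (x < y)%O} ->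
  senum (x |: A) = x :: senum A.
Proof.
move=> ltxA; apply: senum_eq_sorted.
  rewrite /= path_sortedE; last exact: lt_trans.
  by rewrite senum_sorted andbT; apply/allP => y; rewrite mem_senum; apply: ltxA.
by move=> y; rewrite in_cons in_setU1 mem_senum.
Qed.

Lemma senum_setD1 A x : senum (A :\ x) = rem x (senum A).
Proof.
apply: senum_eq_sorted.
  exact: (subseq_sorted lt_trans (rem_subseq _ _) (senum_sorted A)).
move=> y; rewrite mem_rem_uniq ?(lt_sorted_uniq (senum_sorted A)) //.
by rewrite inE mem_senum in_setD1.
Qed.

Lemma senum_setD2_ends J y u z : senum J = y :: rcons u z ->
  senum (J :\: [set y; z]) = u.
Proof.
move=> eJ; have sorted_J : sorted <%O (y :: rcons u z) by rewrite -eJ senum_sorted.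
have := lt_sorted_uniq sorted_J.
rewrite /= mem_rcons !inE rcons_uniq negb_or => /andP[/andP[_ yu] /andP[zu _]].
apply: senum_eq_sorted.
  apply: subseq_sorted (path_sorted sorted_J); first exact: lt_trans.
  by rewrite -cats1 prefix_subseq.
move=> v; rewrite in_setD -[v \in J]mem_senum eJ !inE mem_rcons !inE.
have [->|_] := eqVneq v y; first by rewrite (negbTE yu).
by have [->|_] := eqVneq v z; first rewrite (negbTE zu).
Qed.

Lemma senum_setU_interleave J L y b u z :
    senum J = y :: rcons u z -> senum L = b :: u -> (y < b)%O -> u != [::] ->
  senum (J :|: L) = y :: b :: rcons u z.
Proof.
move=> eJ eL ltyb u_neq0; apply: senum_eq_sorted.
  have := senum_sorted J; have := senum_sorted L; rewrite eJ eL /= !rcons_path.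
  by case: u u_neq0 {eJ eL} => //= x u _ -> /andP[_ ->]; rewrite ltyb.
move=> v; rewrite !inE -!mem_senum eJ eL !inE mem_rcons !inE.
by case: (v == y); case: (v == b); case: (v == z); case: (v \in u).
Qed.

Lemma senum_setD1_head A x s : senum A = x :: s -> senum (A :\ x) = s.
Proof. by move=> eA; rewrite senum_setD1 eA /= eqxx. Qed.

Lemma senum_head_nonempty x0 A : A != set0 ->
  senum A = nth x0 (senum A) 0 :: senum (A :\ nth x0 (senum A) 0).
Proof.
case eA: (senum A) => [|x s] A_neq0; last by rewrite /= (senum_setD1_head eA).
by move: A_neq0; rewrite -cards_eq0 -size_senum eA.
Qed.

Lemma senum_setU_setD1 J L y b u z x0 k :
    senum J = y :: rcons u z -> senum L = b :: u -> (y < b)%O -> (k < size u)%N ->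
  senum ((J :|: L) :\ nth x0 u k) = y :: b :: rcons (rem_nth k u) z.
Proof.
move=> eJ eL ltyb ltku; have u_neq0 : u != [::] by case: u ltku {eL eJ}.
have eJL := senum_setU_interleave eJ eL ltyb u_neq0.
have := lt_sorted_uniq (senum_sorted (J :|: L)); rewrite eJL /= !inE mem_rcons !inE rcons_uniq !negb_or.
move=> /and4P[/and3P[_ _ yu] + zu uniq_u].
rewrite mem_rcons inE negb_or => /andP[_ bu].
have ukin := mem_nth x0 ltku.
have neq_uk v : v \notin u -> v != nth x0 u k by apply: contraNneq => ->.
rewrite -(rem_nth_uniq x0) // senum_setD1 eJL /= !ifN_eq ?neq_uk //.
by rewrite !rem_filter ?rcons_uniq ?zu // filter_rcons /= neq_uk.
Qed.

Section MinimalElement.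
Variables (x : S) (J : {set S}).
Hypothesis ltxJ : {in J, forall y, (x < y)%O}.

Lemma notin_lt : x \notin J.
Proof. by apply/negP => /ltxJ; rewrite ltxx. Qed.

Lemma ellJ_setU1_lt K : K \subset J -> ellJ (x |: J) K = (ellJ J K + #|K|)%N.
Proof.
move=> sKJ; rewrite /ellJ -sum1_card -big_split /=; apply: eq_bigr => i iK.
have iJ := subsetP sKJ i iK.
rewrite senum_setU1_lt //= ifN; last by apply: contraNneq notin_lt => ->.
by rewrite subSn ?addn1 // index_senum_subset.
Qed.

Lemma ellJ_setU1_both K : K \subset J -> ellJ (x |: J) (x |: K) = ellJ J K.
Proof.
move=> sKJ; have xK : x \notin K by apply: contraNN notin_lt => /(subsetP sKJ).
rewrite /ellJ big_setU1 //= !senum_setU1_lt //; last by move=> y /(subsetP sKJ) /ltxJ.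
rewrite /= eqxx subnn add0n; apply: eq_bigr => i iK.
have xi : x != i by apply: contraNneq xK => ->.
by rewrite (negbTE xi) subSS.
Qed.

End MinimalElement.

End IncreasingEnumeration.

Section SubsetSums.
Variables (d : Order.disp_t) (S : finOrderType d) (R : comPzRingType) (q : R).
Implicit Types (J K : {set S}) (w : seq S).

(* For odd #|K|, #|K|./2 is the exponent (#K - 1)/2 of τ^-. *)
Definition tau_coef (parity : bool) J w : R :=
  \sum_(K : {set S} | (K \subset J) && (odd #|K| == parity))
     (tword (J :\: K) == w)%:R * ((-1) ^+ ellJ J K * (-q) ^+ #|K|./2).

Lemma fa_coef_tau_minus J w : fa_coef (tau_minus q J) w = tau_coef true J w.
Proof.
rewrite /fa_coef /tau_minus big_map big_filter_cond big_enum_cond /tau_coef.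
rewrite big_mkcond [RHS]big_mkcond; apply: eq_bigr => K _ /=.
rewrite powersetE eqb_id; case: (K \subset J) => //=.
case oddK: (odd #|K|) => //=; case: eqP => _; rewrite ?mul1r ?mul0r //.
by case: #|K| oddK => //= n; rewrite uphalf_half => /negbTE ->.
Qed.

Lemma tau_coef_set0 b w : tau_coef b set0 w = tau_rec q [::] b w.
Proof.
have senum0 : senum (set0 : {set S}) = [::] by apply/nilP; rewrite /nilp size_senum cards0.
case: b; rewrite /tau_coef.
  by rewrite big_pred0 // => K; rewrite subset0; case: eqP => // ->; rewrite cards0.
rewrite (big_pred1 set0) => [|K]; last first.
  by rewrite subset0 andb_idr // => /eqP ->; rewrite cards0.
by rewrite cards0 setDv /tword senum0 /ellJ big_set0 expr0 !mulr1 eq_sym.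
Qed.

Lemma sum_subset_setU1 x J (P : pred {set S}) (F : {set S} -> R) : x \notin J ->
  \sum_(K : {set S} | (K \subset x |: J) && P K) F K =
  \sum_(K : {set S} | (K \subset J) && P K) F K
  + \sum_(K : {set S} | (K \subset J) && P (x |: K)) F (x |: K).
Proof.
move=> xJ; have subU1 K : x \notin K -> (K \subset x |: J) = (K \subset J).
  by move=> xK; rewrite -[in RHS](setU1K xJ) subsetD1 xK andbT.
have notsub K : x \in K -> (K \subset J) = false.
  by move=> xK; apply: contraNF xJ => /subsetP; apply.
rewrite (bigID (fun K : {set S} => x \in K)) /= addrC; congr (_ + _).
  apply: eq_bigl => K; case xK: (x \in K); first by rewrite notsub ?andbF.
  by rewrite subU1 ?xK ?andbT.
rewrite (reindex_onto (fun K : {set S} => x |: K) (fun K : {set S} => K :\ x)) /=.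
  apply: eq_bigl => K; rewrite setU11 andbT.
  have [xK|xK] := boolP (x \in K).
    by rewrite notsub //=; case: eqP => [/setP/(_ x)|]; rewrite ?setD11 ?xK ?andbF.
  by rewrite setU1K ?xK // eqxx andbT subUset sub1set setU11 subU1 ?xK.
by move=> K /andP[_ xK]; rewrite setD1K.
Qed.

Lemma tau_coef_setU1_lt x J b w : {in J, forall y, (x < y)%O} ->
  tau_coef b (x |: J) w =
    if b then tau_coef false J w - lmulT x (tau_coef true J) w
    else lmulT x (tau_coef false J) w - q * tau_coef true J w.
Proof.
move=> ltxJ; have xJ := notin_lt ltxJ.
have notin_sub K : K \subset J -> x \notin K.
  by move=> sKJ; apply: contraNN xJ => /(subsetP sKJ).
have tword_setU1D K : K \subset J -> tword ((x |: J) :\: K) = x :: tword (J :\: K).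
  move=> sKJ; rewrite /tword -senum_setU1_lt; last by move=> y /setDP[/ltxJ].
  congr senum; apply/setP => y; rewrite !inE.
  by case: eqVneq => // ->; rewrite (negbTE (notin_sub _ sKJ)).
have setU1D2 K : (x |: J) :\: (x |: K) = J :\: K.
  by apply/setP => y; rewrite !inE; case: eqVneq => // ->; rewrite (negbTE xJ) andbF.
have with_x : \sum_(K : {set S} | (K \subset J) && (odd #|x |: K| == b))
    (tword ((x |: J) :\: (x |: K)) == w)%:R
      * ((-1) ^+ ellJ (x |: J) (x |: K) * (-q) ^+ #|x |: K|./2)
    = if b then tau_coef false J w else - q * tau_coef true J w.
  have cardU1 K : K \subset J -> #|x |: K| = #|K|.+1.
    by move=> sKJ; rewrite cardsU1 notin_sub.
  rewrite (eq_bigl (fun K : {set S} => (K \subset J) && (odd #|K| == ~~ b))) => [|K]; last first.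
    by case sKJ: (K \subset J); rewrite //= cardU1 //=; case: b; case: (odd _).
  case: b; rewrite /tau_coef ?mulr_sumr; apply: eq_bigr => K /andP[sKJ /eqP oddK];
    rewrite setU1D2 ellJ_setU1_both // cardU1 //= uphalf_half oddK ?exprS //; ring.
have without_x : \sum_(K : {set S} | (K \subset J) && (odd #|K| == b))
    (tword ((x |: J) :\: K) == w)%:R * ((-1) ^+ ellJ (x |: J) K * (-q) ^+ #|K|./2)
    = (if b then -1 else 1) * lmulT x (tau_coef b J) w.
  rewrite /lmulT /tau_coef !mulr_sumr; apply: eq_bigr => K /andP[sKJ /eqP oddK].
  rewrite tword_setU1D // ellJ_setU1_lt // eq_cons_lmulT /lmulT.
  by rewrite exprD -[(-1) ^+ #|K|]signr_odd oddK; case: b {oddK with_x}; ring.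
by rewrite {1}/tau_coef sum_subset_setU1 // without_x with_x; case: b {with_x without_x}; ring.
Qed.

Lemma tau_coef_senum b J w : tau_coef b J w = tau_rec q (senum J) b w.
Proof.
move eJ : (senum J) => s; elim: s J eJ b w => [|x s IH] J eJ b w.
  suff -> : J = set0 by exact: tau_coef_set0.
  by apply/eqP; rewrite -cards_eq0 -size_senum eJ.
have sorted_xs : sorted <%O (x :: s) by rewrite -eJ senum_sorted.
have eJx := senum_setD1_head eJ.
have ltxJ : {in J :\ x, forall y, (x < y)%O}.
  by move=> y; rewrite -mem_senum eJx; apply/allP/(order_path_min lt_trans sorted_xs).
have xJ : x \in J by rewrite -mem_senum eJ mem_head.
by rewrite -(setD1K xJ) tau_coef_setU1_lt //= /lmulT !IH.
Qed.

End SubsetSums.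

Lemma fa_coef_tau_minus_senum (d : Order.disp_t) (S : finOrderType d) (R : comPzRingType)
  (q : R) (J : {set S}) : fa_coef (tau_minus q J) =1 tau_rec q (senum J) true.
Proof. by move=> w; rewrite fa_coef_tau_minus tau_coef_senum. Qed.

Lemma fa_coef_alt_sum_tau_minus (d : Order.disp_t) (S : finOrderType d)
    (R : comPzRingType) (q : R) (J L : {set S}) x0 y b u z w :
    senum J = y :: rcons u z -> senum L = b :: u -> (y < b)%O ->
  fa_coef (fa_sum [seq fa_scale ((-1) ^+ i)
                      (tau_minus q ((J :|: L) :\ nth x0 (senum J) i.-1))
                  | i <- iota 2 (size u)]) w =
  \sum_(k < size u) (-1) ^+ k * tau_rec q (y :: b :: rcons (rem_nth k u) z) true w.
Proof.
move=> eJ eL ltyb; rewrite fa_coef_sum big_map -[2%N]addn0 iotaDl big_map.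
rewrite -[in iota _ (size u)](subn0 (size u)) -/(index_iota 0 _) big_mkord.
apply: eq_bigr => k _.
have -> : nth x0 (senum J) (2 + k).-1 = nth x0 u k by rewrite eJ /= nth_rcons ltn_ord.
rewrite fa_coef_scale fa_coef_tau_minus_senum (senum_setU_setD1 x0 eJ eL) //.
by rewrite !exprS !mulN1r opprK.
Qed.

Theorem lemma3p3 (d : Order.disp_t) (S : finOrderType d) (R : comPzRingType)
  (q : R) (J L : {set S}) (x0 : S) :
  let n := #|J| in
  let j := fun i : nat => nth x0 (senum J) i.-1 in
  let l1 := nth x0 (senum L) 0 in
  (2 <= n)%N ->
  L != set0 ->
  J :\: [set j 1%N; j n] = L :\ l1 ->
  (j 1%N < l1)%O ->
  fa_eq
    (fa_sum
      [:: tau_minus q J;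
          fa_opp (fa_mul (tau_minus q L) (fa_word R [:: j n]));
          fa_opp (fa_sum [seq fa_scale ((-1) ^+ i) (tau_minus q ((J :|: L) :\ j i))
                         | i <- iota 2 (n - 2)]);
          fa_scale ((-1) ^+ n) (fa_mul (fa_word R [:: j 1%N]) (tau_minus q L))])
    (fa_zero R S).
Proof.
move=> n j l1 le2n L_neq0 eJL ltjl w.
have [y [u [z eJ]]] : exists y u z, senum J = y :: rcons u z.
  move: le2n; rewrite /n -size_senum; case: (senum J) => [|y s] //.
  by case/lastP: s => [|u z] // _; exists y, u, z.
have en : n = (size u).+2 by rewrite /n -size_senum eJ /= size_rcons.
have ej1 : j 1%N = y by rewrite /j eJ.
have ejn : j n = z by rewrite /j eJ en /= nth_rcons ltnn eqxx.
have eL : senum L = l1 :: u.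
  by rewrite (senum_head_nonempty x0 L_neq0) -/l1 -eJL ej1 ejn (senum_setD2_ends eJ).
rewrite ej1 in ltjl; rewrite ej1 ejn en subSS subSS subn0.
rewrite fa_coef_zero fa_coef_sum !big_cons big_nil addr0 !fa_coef_opp.
rewrite fa_coef_mul_wordr fa_coef_scale fa_coef_mul_wordl.
rewrite (fa_coef_alt_sum_tau_minus _ _ _ eJ eL) // fa_coef_tau_minus_senum.
rewrite (eq_rmulT _ (fa_coef_tau_minus_senum q L)) (eq_lmulT _ (fa_coef_tau_minus_senum q L)).
rewrite eJ eL !exprS !mulN1r opprK !addrA.
exact: tau_rec_exchange.
Qed.
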